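(* Let $0<p<1$ be a constant. For positive integers $n,m$, let $G_{n,m}$ be the random bipartite graph on the vertex set $V_1\cup V_2$ with $V_1\cap V_2=\emptyset$, $|V_1|=n$, $|V_2|=m$, in which each pair $\{i,k\}$ with $i\in V_1$, $k\in V_2$ is an edge independently with probability $p$, and there are no other edges. Suppose $n\in\Theta(m)$, i.e. there are constants $a,b>0$ with $n\le a m$ and $m\le b n$ for all sufficiently large $n,m$. Then $\Pr(G_{n,m}\text{ is a UNN})\to 1$ as $n+m\to\infty$.
   Context: All graphs are finite, simple and undirected. For a vertex $v$ of a graph, $\mathrm{nb}(v)$ denotes the set of its neighbors; a vertex is not its own neighbor. A graph $G=(V,E)$ is a unique-neighborhood network (UNN) if distinct vertices have distinct neighborhoods, i.e. $\mathrm{nb}(u)\neq\mathrm{nb}(v)$ (equivalently $\mathrm{nb}(u)\triangle\mathrm{nb}(v)\neq\emptyset$) for all distinct $u,v\in V$. *)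

From HB Require Import structures.
From mathcomp Require Import all_boot all_order all_algebra.
From mathcomp Require Import reals.
Set Implicit Arguments. Unset Strict Implicit. Unset Printing Implicit Defensive.
Import Order.TTheory GRing.Theory Num.Theory.
Local Open Scope ring_scope.

Definition nb (T : finType) (adj : rel T) (v : T) : {set T} := [set u | adj v u].

Definition UNN (T : finType) (adj : rel T) : bool :=
  [forall u : T, forall v : T, (u != v) ==> (nb adj u != nb adj v)].

(* Bipartite graph on V1 = 'I_n (left, inl) and V2 = 'I_m (right, inr),
   whose edges are exactly the pairs {inl i, inr k} with (i,k) \in E. *)
Definition bip_adj (n m : nat) (E : {set 'I_n * 'I_m}) : rel ('I_n + 'I_m) :=
  fun u v => match u, v with
             | inl i, inr k => (i, k) \in E
             | inr k, inl i => (i, k) \in E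
             | _, _ => false
             end.

(* Probability, in G_{n,m} with edge probability p, that the random edge
   set satisfies the predicate P: each of the n*m possible edges is present
   independently with probability p. *)
Definition prob_Gnm (R : realType) (p : R) (n m : nat)
    (P : {set 'I_n * 'I_m} -> bool) : R :=
  \sum_(E : {set 'I_n * 'I_m} | P E) p ^+ #|E| * (1 - p) ^+ (n * m - #|E|)%N.

Definition prob_UNN (R : realType) (p : R) (n m : nat) : R :=
  prob_Gnm p (fun E : {set 'I_n * 'I_m} => UNN (bip_adj E)).

From HB Require Import structures.
From mathcomp Require Import all_boot all_order all_algebra.
From mathcomp Require Import reals.
From mathcomp Require Import lra zify ring.
Import Order.TTheory GRing.Theory Num.Theory.
Set Implicit Arguments. Unset Strict Implicit. Unset Printing Implicit Defensive.
Local Open Scope ring_scope.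

(* A bipartite graph fails to be a UNN only if two left vertices have the same
   neighbourhood, two right vertices have the same neighbourhood, or some left
   vertex is isolated: a left and a right vertex can only share a neighbourhood
   when both are empty.  Two given rows of the random biadjacency matrix agree
   with probability q^m, q = p^2 + (1-p)^2, and a given row is empty with
   probability (1-p)^m, so by the union bound the failure probability is at most
   n^2 q^m + m^2 q^n + n (1-p)^m.  As n and m are comparable, each term is
   O(s^2 r^s) with r = 1 - p(1-p) < 1 and s = min(n, m) -> oo. *)

Lemma sum_set_prod (R : comPzSemiRingType) (T : finType) (g : T -> bool -> R) :
  \sum_(E : {set T}) \prod_(x : T) g x (x \in E) = \prod_(x : T) (g x true + g x false).
Proof.
under [RHS]eq_bigr do rewrite -big_bool /=.
rewrite bigA_distr_bigA /= (reindex (fun f : {ffun T -> bool} => [set x | f x])) /=.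
  by apply: eq_bigr => f _; apply: eq_bigr => x _; rewrite inE.
apply: onW_bij; exists (fun E : {set T} => [ffun x => x \in E]).
  by move=> f; apply/ffunP => x; rewrite ffunE inE.
by move=> E; apply/setP => x; rewrite inE ffunE.
Qed.

Lemma natr_forall (R : comPzSemiRingType) (T : finType) (P : pred T) :
  ([forall x, P x])%:R = \prod_(x : T) (P x)%:R :> R.
Proof.
case: forallP => [allP | /forallP/forallPn[x /negbTE Px]].
  by rewrite big1 // => x _; rewrite allP.
by rewrite (bigD1 x) //= Px mul0r.
Qed.

Lemma natr_exists_le (R : numDomainType) (T : finType) (P : pred T) :
  ([exists x, P x])%:R <= \sum_(x : T) (P x)%:R :> R.
Proof.
case: existsP => [[x Px]|_]; last by rewrite sumr_ge0.
by rewrite (bigD1 x) //= Px lerDl sumr_ge0.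
Qed.

Lemma prod_pick_inj (R : comPzSemiRingType) (J T : finType) (c : J -> T) (F : J -> R) :
  injective c -> \prod_(x : T) oapp F 1 [pick k | c k == x] = \prod_(k : J) F k.
Proof.
move=> c_inj; rewrite (bigID (mem (c @: [set: J]))) /= big_imset /=; last by move=> ? ? _ _ /c_inj.
rewrite [X in _ * X]big1 ?mulr1; last first.
  move=> x /imsetP noc; case: pickP => //= k /eqP ckx.
  by case: noc; exists k; rewrite ?inE.
apply: eq_big => [k|k _]; first by rewrite inE.
case: pickP => [k' /eqP /c_inj -> //|/(_ k)].
by rewrite eqxx.
Qed.

Section Bernoulli.
Variables (R : numDomainType) (p : R).

Definition coin (b : bool) : R := if b then p else 1 - p.

Definition weight (T : finType) (E : {set T}) : R := \prod_(x : T) coin (x \in E).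

Definition Pr (T : finType) (P : pred {set T}) : R := \sum_(E | P E) weight E.

Lemma weightE (T : finType) (E : {set T}) :
  weight E = p ^+ #|E| * (1 - p) ^+ (#|T| - #|E|).
Proof.
rewrite /weight (bigID (mem E)) /= (eq_bigr (fun=> p)) => [|x ->//].
rewrite prodr_const (eq_bigr (fun=> 1 - p)) => [|x /negbTE->//].
by rewrite prodr_const -(cardC (mem E)) addKn.
Qed.

Lemma sum_weight_prod (T : finType) (h : T -> bool -> R) :
  \sum_(E : {set T}) weight E * \prod_(x : T) h x (x \in E)
    = \prod_(x : T) (p * h x true + (1 - p) * h x false).
Proof.
by rewrite -(sum_set_prod (fun x b => coin b * h x b)); under eq_bigr do rewrite -big_split.
Qed.

Lemma PrE (T : finType) (P : pred {set T}) : Pr P = \sum_(E : {set T}) (P E)%:R * weight E.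
Proof. by rewrite /Pr big_mkcond; apply: eq_bigr => E _; case: (P E); rewrite ?mul1r ?mul0r. Qed.

Lemma Pr_predT (T : finType) : Pr (@predT {set T}) = 1.
Proof.
have := sum_weight_prod (fun (x : T) (b : bool) => 1).
rewrite [RHS]big1 => [|x _]; last by rewrite !mulr1 addrC subrK.
by rewrite /Pr; under [X in X = 1 -> _]eq_bigr do rewrite big1 // mulr1.
Qed.

Lemma Pr_predC (T : finType) (P : pred {set T}) : Pr (predC P) = 1 - Pr P.
Proof. by rewrite -(Pr_predT T) /Pr (bigID P predT) /= addrC addrK. Qed.

Lemma Pr_preimset_eq (J T : finType) (c : J -> T) (A : {set J}) :
  injective c -> Pr (fun E : {set T} => c @^-1: E == A) = weight A.
Proof.
move=> c_inj; pose h x b : R := oapp (fun k => (b == (k \in A))%:R) 1 [pick k | c k == x].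
have indicatorE E : (c @^-1: E == A)%:R = \prod_(x : T) h x (x \in E).
  have -> : (c @^-1: E == A) = [forall k, (c k \in E) == (k \in A)].
    apply/eqP/forallP => [<- k|sameA]; first by rewrite inE.
    by apply/setP => k; rewrite inE; exact/eqP.
  rewrite natr_forall -(prod_pick_inj _ c_inj); apply: eq_bigr => x _.
  by rewrite /h; case: pickP => //= k /eqP <-.
rewrite PrE; under eq_bigr do rewrite indicatorE mulrC.
rewrite sum_weight_prod /weight -(prod_pick_inj _ c_inj); apply: eq_bigr => x _.
rewrite /h; case: pickP => [k _|_] /=; last by rewrite !mulr1 addrC subrK.
by case: (k \in A); rewrite /= ?mulr1 ?mulr0 ?addr0 ?add0r.
Qed.

Lemma Pr_preimset (J T : finType) (c : J -> T) (P : pred {set J}) :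
  injective c -> Pr (fun E : {set T} => P (c @^-1: E)) = Pr P.
Proof.
move=> c_inj; rewrite /Pr /= (partition_big (fun E : {set T} => c @^-1: E) P) //=.
apply: eq_bigr => A PA; rewrite -(Pr_preimset_eq A c_inj).
by apply: eq_bigl => E; case: eqP => [->|]; rewrite ?PA ?andbF.
Qed.

Lemma Pr_sum_halves_eq (J : finType) :
  Pr (fun E : {set J + J} => inl @^-1: E == inr @^-1: E)
    = (p ^+ 2 + (1 - p) ^+ 2) ^+ #|J|.
Proof.
pose twice (A : {set J}) := [set x : J + J | match x with inl k | inr k => k \in A end].
rewrite /Pr (reindex_onto twice (fun E => inl @^-1: E)) => [|E /eqP/setP halvesE]; last first.
  by apply/setP => -[k|k]; move: (halvesE k); rewrite !inE.
rewrite (eq_bigl predT) => [|A]; last first.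
  by apply/andP; split; apply/eqP/setP => k; rewrite !inE.
have weight_twice A : weight (twice A) = weight A ^+ 2.
  by rewrite /weight big_sumType expr2; congr (_ * _); apply: eq_bigr => k _; rewrite inE.
under eq_bigr do rewrite weight_twice /weight -prodrXl.
by rewrite (sum_set_prod (fun _ b => coin b ^+ 2)) prodr_const.
Qed.

Lemma Pr_avoid (J T : finType) (c : J -> T) : injective c ->
  Pr (fun E : {set T} => [forall k, c k \notin E]) = (1 - p) ^+ #|J|.
Proof.
move=> c_inj; have := Pr_preimset_eq set0 c_inj.
rewrite /weight (eq_bigr (fun=> 1 - p)) ?prodr_const => [<-|k _]; last by rewrite in_set0.
apply: eq_bigl => E; apply/forallP/eqP => [avoid|/setP avoid k].
  by apply/setP => k; rewrite !inE; exact/negbTE/avoid.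
by have := avoid k; rewrite !inE => ->.
Qed.

Lemma Pr_twins (J T : finType) (c1 c2 : J -> T) :
  injective c1 -> injective c2 -> (forall k k', c1 k != c2 k') ->
  Pr (fun E : {set T} => [forall k, (c1 k \in E) == (c2 k \in E)])
    = (p ^+ 2 + (1 - p) ^+ 2) ^+ #|J|.
Proof.
move=> inj1 inj2 c12; pose c x := match x with inl k => c1 k | inr k => c2 k end.
have c_inj : injective c.
  move=> [k|k] [k'|k'] /= eqc; first by rewrite (inj1 _ _ eqc).
  - by have := c12 k k'; rewrite eqc eqxx.
  - by have := c12 k' k; rewrite eqc eqxx.
  by rewrite (inj2 _ _ eqc).
rewrite -Pr_sum_halves_eq -(Pr_preimset _ c_inj); apply: eq_bigl => E.
apply/forallP/eqP => [same|/setP same k]; first by apply/setP => k; rewrite !inE; exact/eqP/same.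
by have := same k; rewrite !inE => ->.
Qed.

Hypotheses (p_ge0 : 0 <= p) (p_le1 : p <= 1).

Lemma weight_ge0 (T : finType) (E : {set T}) : 0 <= weight E.
Proof. by apply: prodr_ge0 => x _; rewrite /coin; case: (x \in E); rewrite ?subr_ge0. Qed.

Lemma le_Pr (T : finType) (P Q : pred {set T}) :
  (forall E, P E -> Q E) -> Pr P <= Pr Q.
Proof.
move=> PQ; rewrite !PrE; apply: ler_sum => E _; apply: ler_wpM2r; first exact: weight_ge0.
by case: (boolP (P E)) => [/PQ->|]; rewrite ?ler0n.
Qed.

Lemma Pr_orb_le (T : finType) (P Q : pred {set T}) :
  Pr (fun E => P E || Q E) <= Pr P + Pr Q.
Proof.
rewrite !PrE -big_split /=; apply: ler_sum => E _; rewrite -mulrDl.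
apply: ler_wpM2r; first exact: weight_ge0.
by case: (P E); case: (Q E); rewrite /= ?addr0 ?add0r ?lerDl.
Qed.

Lemma Pr_exists_le (T I : finType) (P : I -> pred {set T}) :
  Pr (fun E => [exists i, P i E]) <= \sum_(i : I) Pr (P i).
Proof.
rewrite PrE; under [X in _ <= X]eq_bigr do rewrite PrE.
rewrite exchange_big /=; apply: ler_sum => E _; rewrite -mulr_suml.
exact/ler_wpM2r/natr_exists_le/weight_ge0.
Qed.

Lemma Pr_exists_distinct_le (T I : finType) (P : I -> I -> pred {set T}) (b : R) :
  0 <= b -> (forall i j, i != j -> Pr (P i j) <= b) ->
  Pr (fun E => [exists i, exists j, (i != j) && P i j E]) <= (#|I| ^ 2)%:R * b.
Proof.
move=> b_ge0 Pb; rewrite mulr_natl -mulnn mulrnA -!sumr_const.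
apply: le_trans (Pr_exists_le _) _; apply: ler_sum => i _.
apply: le_trans (Pr_exists_le _) _; apply: ler_sum => j _.
have [<-|ij] := eqVneq i j; first by rewrite /Pr big_pred0 // => E; rewrite eqxx.
by apply: le_trans (Pb _ _ ij); apply: le_Pr => E /andP[].
Qed.

End Bernoulli.

Lemma prob_GnmE (R : realType) (p : R) (n m : nat) (P : pred {set 'I_n * 'I_m}) :
  prob_Gnm p P = Pr p P.
Proof. by apply: eq_bigr => E _; rewrite weightE card_prod !card_ord. Qed.

Lemma bip_adj_not_UNN (n m : nat) (E : {set 'I_n * 'I_m}) : ~~ UNN (bip_adj E) ->
  [|| [exists i, exists i', (i != i') && [forall k, ((i, k) \in E) == ((i', k) \in E)]],
      [exists k, exists k', (k != k') && [forall i, ((i, k) \in E) == ((i, k') \in E)]]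
    | [exists i, [forall k, (i, k) \notin E]]].
Proof.
case/forallPn => x /forallPn[y]; rewrite negb_imply negbK => /andP[xy /eqP/setP same_nb].
have {same_nb} adjE z : bip_adj E x z = bip_adj E y z by have := same_nb z; rewrite !inE.
case: x y xy adjE => [i|k] [i'|k'] xy adjE.
- apply/orP; left; apply/existsP; exists i; apply/existsP; exists i'.
  have -> : i != i' by apply: contraNneq xy => ->.
  apply/forallP => k; exact/eqP/(adjE (inr k)).
- apply/or3P/Or33/existsP; exists i; apply/forallP => j; by have /= -> := adjE (inr j).
- apply/or3P/Or33/existsP; exists i'; apply/forallP => j; by have /= <- := adjE (inr j).
- apply/or3P/Or32/existsP; exists k; apply/existsP; exists k'.
  have -> : k != k' by apply: contraNneq xy => ->.
  apply/forallP => i; exact/eqP/(adjE (inl i)).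
Qed.

Lemma Pr_not_UNN_le (R : realType) (p : R) (n m : nat) : 0 <= p -> p <= 1 ->
  1 - prob_UNN p n m <= (n ^ 2)%:R * (p ^+ 2 + (1 - p) ^+ 2) ^+ m
     + ((m ^ 2)%:R * (p ^+ 2 + (1 - p) ^+ 2) ^+ n + n%:R * (1 - p) ^+ m).
Proof.
move=> p0 p1; have q_ge0 : 0 <= p ^+ 2 + (1 - p) ^+ 2 by rewrite addr_ge0 ?sqr_ge0.
rewrite /prob_UNN prob_GnmE -Pr_predC.
apply: le_trans (le_Pr p0 p1 (@bip_adj_not_UNN n m)) _.
apply: le_trans (Pr_orb_le p0 p1 _ _) _; apply: lerD.
  rewrite -[n in (n ^ 2)%N](card_ord n).
  apply: Pr_exists_distinct_le => [//|//||i i' ii']; first exact: exprn_ge0.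
  rewrite (@Pr_twins _ p _ _ (pair i) (pair i')) ?card_ord // => [k k' []//|k k' []//|k k'].
  by rewrite xpair_eqE negb_and ii'.
apply: le_trans (Pr_orb_le p0 p1 _ _) _; apply: lerD.
  rewrite -[m in (m ^ 2)%N](card_ord m).
  apply: Pr_exists_distinct_le => [//|//||k k' kk']; first exact: exprn_ge0.
  rewrite (@Pr_twins _ p _ _ (pair^~ k) (pair^~ k')) ?card_ord // => [i i' []//|i i' []//|i i'].
  by rewrite xpair_eqE negb_and kk' orbT.
apply: le_trans (Pr_exists_le p0 p1 _) _.
rewrite mulr_natl -[n in _ *+ n](card_ord n) -sumr_const; apply: ler_sum => i _.
by rewrite (@Pr_avoid _ p _ _ (pair i)) ?card_ord // => k k' [].
Qed.

Lemma exp3_le_bin3 (s : nat) : (4 <= s)%N -> (s ^ 3 <= 48 * 'C(s, 3))%N.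
Proof.
move=> s_ge4; rewrite -(leq_pmul2r (isT : (0 < 3`!)%N)) -mulnA bin_ffact.
by case: s s_ge4 => [|[|[|[|s]]]] //= _; rewrite !ffactnS ffactn0 !factS fact0; nia.
Qed.

Lemma bin3_le_exp (R : numDomainType) (h : R) (s : nat) : 0 <= h ->
  'C(s, 3)%:R * h ^+ 3 <= (h + 1) ^+ s.
Proof.
move=> h_ge0; have terms_ge0 (i : 'I_s.+1) : 0 <= h ^+ i *+ 'C(s, i).
  by rewrite mulrn_wge0 ?exprn_ge0.
rewrite exprD1n; case: (ltnP s 3) => [s_lt3|s_ge3].
  by rewrite bin_small // mul0r sumr_ge0.
by rewrite (bigD1 (Ordinal (s_ge3 : (3 < s.+1)%N))) //= mulrC mulr_natr lerDl sumr_ge0.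
Qed.

Lemma sqr_mul_geometric_lt (R : archiRealFieldType) (r d : R) :
  0 <= r -> r < 1 -> 0 < d ->
  exists S : nat, forall s, (S <= s)%N -> s%:R ^+ 2 * r ^+ s < d.
Proof.
move=> r_ge0 r_lt1 d_gt0; have [->|r_neq0] := eqVneq r 0.
  by exists 1%N => -[|s] // _; rewrite expr0n mulr0.
have r_gt0 : 0 < r by rewrite lt0r r_neq0.
(* With r = 1/(1+h): (1+h)^s >= C(s,3) h^3 >= (s h)^3 / 48, so s^2 r^s <= 48 / (s h^3). *)
pose h := r^-1 - 1.
have h_gt0 : 0 < h by rewrite subr_gt0 invf_gt1.
have rh1 : (h + 1) * r = 1 by rewrite subrK mulVf.
exists (4 + Num.bound (48 / (h ^+ 3 * d)))%N => s s_ge.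
have s_ge4 : (4 <= s)%N := leq_trans (leq_addr _ _) s_ge.
have sh_gt0 : 0 < s%:R * h ^+ 3 by rewrite mulr_gt0 ?exprn_gt0 // ltr0n (leq_trans _ s_ge4).
have shd_gt48 : 48 < s%:R * h ^+ 3 * d.
  rewrite -mulrA -ltr_pdivrMr ?mulr_gt0 ?exprn_gt0 //.
  apply: lt_le_trans (archi_boundP _) _; first by rewrite divr_ge0 ?mulr_ge0 ?ltW ?exprn_gt0.
  by rewrite ler_nat (leq_trans (leq_addl _ _) s_ge).
have sh3_le : (s%:R * h) ^+ 3 <= 48 * (h + 1) ^+ s.
  rewrite exprMn -natrX; apply: le_trans (_ : (48 * 'C(s, 3))%:R * h ^+ 3 <= _).
    by apply: ler_wpM2r; [rewrite exprn_ge0 // ltW | rewrite ler_nat exp3_le_bin3].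
  by rewrite natrM -mulrA ler_wpM2l // bin3_le_exp // ltW.
have sh3r_le : s%:R * h ^+ 3 * (s%:R ^+ 2 * r ^+ s) <= 48.
  have -> : s%:R * h ^+ 3 * (s%:R ^+ 2 * r ^+ s) = (s%:R * h) ^+ 3 * r ^+ s by ring.
  have -> : 48 = 48 * (h + 1) ^+ s * r ^+ s :> R.
    by rewrite -mulrA -(exprMn s) rh1 expr1n mulr1.
  by rewrite ler_wpM2r ?exprn_ge0.
by rewrite -(ltr_pM2l sh_gt0) (le_lt_trans sh3r_le shd_gt48).
Qed.

Lemma leq_of_linear_bound (R : realDomainType) (a : R) (S n m : nat) : 0 <= a ->
  n%:R <= a * m%:R -> (a + 1) * S%:R <= (n + m)%:R -> (S <= m)%N.
Proof.
move=> a_ge0 n_le hS; rewrite -(ler_nat R) -(ler_pM2l (_ : 0 < a + 1)) ?ltr_wpDl //.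
by apply: le_trans hS _; rewrite natrD mulrDl mul1r lerD2r.
Qed.

Lemma sqr_mul_exp_le (R : realDomainType) (c x r : R) (t s : nat) :
  t%:R <= c * s%:R -> 0 <= x -> x <= r ->
  (t ^ 2)%:R * x ^+ s <= c ^+ 2 * (s%:R ^+ 2 * r ^+ s).
Proof.
move=> t_le x_ge0 x_le_r; rewrite mulrA -exprMn natrX.
apply: ler_pM; rewrite ?exprn_ge0 //; last by rewrite lerXn2r ?nnegrE // (le_trans x_ge0).
by rewrite lerXn2r ?nnegrE // (le_trans _ t_le).
Qed.

Lemma comparable_eventually_ge (R : archiRealFieldType) (a b : R) (S : nat) :
  0 <= a -> 0 <= b -> exists N : nat, forall n m : nat, (N <= n + m)%N ->
    n%:R <= a * m%:R -> m%:R <= b * n%:R -> (S <= n)%N /\ (S <= m)%N.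
Proof.
move=> a_ge0 b_ge0; exists (Num.bound ((a + b + 1) * S%:R)) => n m N_le n_le m_le.
have NS : (a + b + 1) * S%:R <= (n + m)%:R.
  apply/ltW/(lt_le_trans (archi_boundP _)); last by rewrite ler_nat.
  by rewrite mulr_ge0 ?ler0n // !addr_ge0.
split; [apply: (leq_of_linear_bound b_ge0 m_le); rewrite addnC
      |apply: (leq_of_linear_bound a_ge0 n_le)];
  by apply: le_trans NS; rewrite ler_wpM2r ?ler0n // lerD2r ?lerDl ?lerDr.
Qed.

Lemma not_UNN_le_geometric (R : realType) (p a b : R) (n m : nat) : 0 < p -> p < 1 ->
  (0 < n)%N -> n%:R <= a * m%:R -> m%:R <= b * n%:R ->
  1 - prob_UNN p n m <= 2 * a ^+ 2 * (m%:R ^+ 2 * (1 - p * (1 - p)) ^+ m)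
                         + b ^+ 2 * (n%:R ^+ 2 * (1 - p * (1 - p)) ^+ n).
Proof.
move=> p_gt0 p_lt1 n_gt0 n_le m_le; set r := 1 - p * (1 - p).
have p'_ge0 : 0 <= 1 - p by rewrite subr_ge0 ltW.
have q_ge0 : 0 <= p ^+ 2 + (1 - p) ^+ 2 by rewrite addr_ge0 ?sqr_ge0.
have [q_le_r p'_le_r] : p ^+ 2 + (1 - p) ^+ 2 <= r /\ 1 - p <= r by rewrite /r; split; nra.
have isolated_le : n%:R * (1 - p) ^+ m <= a ^+ 2 * (m%:R ^+ 2 * r ^+ m).
  apply: le_trans _ (sqr_mul_exp_le n_le p'_ge0 p'_le_r).
  by rewrite ler_wpM2r ?exprn_ge0 // ler_nat -mulnn leq_pmull.
apply: le_trans (Pr_not_UNN_le n m (ltW p_gt0) (ltW p_lt1)) _.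
have := sqr_mul_exp_le n_le q_ge0 q_le_r; have := sqr_mul_exp_le m_le q_ge0 q_le_r; lra.
Qed.

Theorem mainTheorem1 (R : realType) (p : R) (hp0 : 0 < p) (hp1 : p < 1)
    (a b : R) (ha : 0 < a) (hb : 0 < b) :
  forall eps : R, 0 < eps ->
  exists N : nat, forall n m : nat,
    (0 < n)%N -> (0 < m)%N -> (N <= n + m)%N ->
    n%:R <= a * m%:R -> m%:R <= b * n%:R ->
    1 - eps < prob_UNN p n m.
Proof.
move=> eps eps_gt0; pose r := 1 - p * (1 - p).
have [r_ge0 r_lt1] : 0 <= r /\ r < 1 by rewrite /r; split; nra.
pose C := 2 * a ^+ 2 + b ^+ 2; pose d := eps / (C + 1).
have C1_gt0 : 0 < C + 1 by rewrite /C; nra.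
have Cd_lt : C * d < eps by rewrite /d mulrA ltr_pdivrMr //; lra.
have [S small] := sqr_mul_geometric_lt r_ge0 r_lt1 (divr_gt0 eps_gt0 C1_gt0).
have [N large] := comparable_eventually_ge S (ltW ha) (ltW hb).
exists N => n m n_gt0 _ N_le n_le m_le; have [S_le_n S_le_m] := large n m N_le n_le m_le.
have := ler_wpM2l (sqr_ge0 a) (ltW (small m S_le_m)).
have := ler_wpM2l (sqr_ge0 b) (ltW (small n S_le_n)).
have := not_UNN_le_geometric hp0 hp1 n_gt0 n_le m_le.
rewrite -/r -/C -/d; rewrite /C in Cd_lt; lra.
Qed.
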